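(* Let $D$ be a data set, $\mathcal{I}$ a finite index set, and for each $i\in\mathcal{I}$ let $D_{P_i}\subseteq D$ (population subset) and $D_{G_i}\subseteq D_{P_i}$ (group subset) be given. Let $h(z)$ be a real-valued function of a data point, and write $\mu(S)=\frac{1}{|S|}\sum_{z\in S}h(z)$. For $C_d>0$ let $\bar\mu^{C_d}(D_{G_i})=\frac{1}{|D_{G_i}|}\sum_{z\in D_{G_i}}\frac{h(z)}{\max(1,|h(z)|/C_d)}$. For $i\in\mathcal{I}$ let $V_i=|\mu(D_{P_i})-\mu(D_{G_i})|$ and $$\tilde V_i=|\mu(D_{P_i})-\bar\mu^{C_d}(D_{G_i})|+\mathcal{N}(0,\sigma_d^2\Delta_d^2),$$ where $\sigma_d>0$ and $\Delta_d=\frac{\sqrt2\,C_d}{\min_{j\in\mathcal{I}}|D_{G_j}|-1}$. Then for every $i\in\mathcal{I}$, $$\mathbb{E}\big[|V_i-\tilde V_i|\big]\le\frac{\sqrt2\,C_d\,\sigma_d}{\min_{j\in\mathcal{I}}|D_{G_j}|-1}+\frac{1}{|D_{G_i}|}\sum_{z\in D_{G_i}}\max\big(0,|h(z)|-C_d\big).$$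
   Context: The expectation is over the Gaussian noise. $V_i$ is the violation of the fairness constraint $\mu(D_{P_i})=\mu(D_{G_i})$ and $\tilde V_i$ its privacy-preserving (clipped and noised) version used in the dual update of the PF-LD algorithm. *)

From HB Require Import structures.
From mathcomp Require Import all_boot all_order all_algebra.
From mathcomp Require Import all_classical all_reals all_analysis.
Set Implicit Arguments. Unset Strict Implicit. Unset Printing Implicit Defensive.
Import Order.TTheory GRing.Theory Num.Theory.
Local Open Scope ring_scope.

Section Defs.
Context {R : realType} {T : finType}.

Definition mean (h : T -> R) (S : {set T}) : R :=
  (#|S|%:R)^-1 * \sum_(z in S) h z.

Definition clipped_mean (C : R) (h : T -> R) (S : {set T}) : R :=
  (#|S|%:R)^-1 * \sum_(z in S) h z / Num.max 1 (`|h z| / C).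

(* min_{j in I} |G_j| (the #|T| seed is harmless since G j ⊆ T) *)
Definition min_card {I : finType} (G : I -> {set T}) : nat :=
  \big[minn/#|T|]_(j : I) #|G j|.

Definition Delta {I : finType} (C : R) (G : I -> {set T}) : R :=
  Num.sqrt 2 * C / ((min_card G)%:R - 1).

Definition Vviol (h : T -> R) (P G : {set T}) : R :=
  `|mean h P - mean h G|.

(* tilde V_i, as a function of the realisation x of the Gaussian noise *)
Definition Vtilde (C : R) (h : T -> R) (P G : {set T}) (x : R) : R :=
  `|mean h P - clipped_mean C h G| + x.

End Defs.

From HB Require Import structures.
From mathcomp Require Import all_boot all_order all_algebra.
From mathcomp Require Import all_classical all_reals all_analysis.
From mathcomp Require Import lebesgue_measure measurable_realfun.
From mathcomp Require Import ring lra.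
Set Implicit Arguments. Unset Strict Implicit. Unset Printing Implicit Defensive.
Import Order.TTheory GRing.Theory Num.Theory.
Import numFieldTopology.Exports numFieldNormedType.Exports.
Local Open Scope ring_scope.

(* Pointwise, the triangle inequality bounds |V_i - Ṽ_i| by the clipping error
   |μ(D_{G_i}) - μ̄(D_{G_i})| plus the absolute value of the noise.  Clipping
   moves each h z by exactly max(0, |h z| - C_d), and a centred Gaussian with
   standard deviation s has E|X| = 2s/√(2π) ≤ s: on the half-line, x times the
   density has the antiderivative -s² times the density. *)

Section normal_abs_moment.
Local Open Scope classical_set_scope.
Context {R : realType}.
Local Notation mu := (@lebesgue_measure R).

Lemma integral_normal_prob (m s : R) (f : R -> \bar R) :
  (forall x, 0 <= f x)%E -> measurable_fun setT f ->
  (\int[normal_prob m s]_x f x = \int[mu]_x (f x * (normal_pdf m s x)%:E))%E.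
Proof.
move=> f0 mf; have numu := normal_prob_dominates m s.
rewrite -(Radon_Nikodym_SigmaFinite.change_of_variables numu f0 measurableT mf).
have mpdf : measurable_fun setT (fun x => (normal_pdf m s x)%:E).
  by apply/measurable_EFinP; exact: measurable_normal_pdf.
have mRN := measurable_int _ (Radon_Nikodym_SigmaFinite.f_integrable numu).
apply: ae_eq_integral; [by []|exact: emeasurable_funM|exact: emeasurable_funM|].
apply: ae_eqe_mul2l; apply: integral_ae_eq => //.
  exact: Radon_Nikodym_SigmaFinite.f_integrable.
by move=> E _ mE; rewrite -Radon_Nikodym_SigmaFinite.f_integral.
Qed.

Lemma normal_pdf0E (s : R) : s != 0 ->
  normal_pdf 0 s = fun x => normal_peak s * expR (- (x ^+ 2 / (s ^+ 2 *+ 2))).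
Proof.
by move=> s0; apply/funext => x; rewrite normal_pdfE // /normal_fun subr0 mulNr.
Qed.

Lemma is_derive_normal_pdf0 (s x : R) : s != 0 ->
  is_derive x 1 (normal_pdf 0 s) (- (x / s ^+ 2) * normal_pdf 0 s x).
Proof.
move=> s0; rewrite normal_pdf0E //.
by apply: is_derive_eq; rewrite scaler0 add0r -![_ *: _]/(_ * _); field.
Qed.

Lemma cvgy_normal_pdf0 (s : R) : s != 0 ->
  normal_pdf 0 s x @[x --> +oo%R] --> 0.
Proof.
move=> s0; rewrite normal_pdf0E // -(mulr0 (normal_peak s)); apply: cvgMl_tmp.
apply: (cvg_comp (fun x => x ^+ 2 / (s ^+ 2 *+ 2)) (fun y => expR (- y))).
  apply: gt0_cvgMly; last exact: cvgr_expr2.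
  by rewrite invr_gt0 pmulrn_lgt0 // exprn_even_gt0.
exact: cvgr_expR.
Qed.

Lemma integral_itvcy_mul_normal_pdf (s : R) : s != 0 ->
  (\int[mu]_(x in `[0%R, +oo[) (x * normal_pdf 0 s x)%:E =
   (s ^+ 2 * normal_peak s)%:E)%E.
Proof.
move=> s0; pose F x := - s ^+ 2 * normal_pdf 0 s x.
have dF (x : R) : is_derive x (1 : R) F (x * normal_pdf 0 s x).
  (* [dpdf] is found by the instance search of [is_derive_eq]. *)
  have dpdf := is_derive_normal_pdf0 x s0.
  by apply: is_derive_eq; rewrite -[_ *: _]/(_ * _); field.
have cpdf := continuous_normal_pdf (m:=0) s0.
rewrite (@ge0_continuous_FTC2y _ (fun x => x * normal_pdf 0 s x) F 0 0).
- rewrite -EFinB /F sub0r mulNr opprK normal_pdf0E // expr0n /= mul0r oppr0.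
  by rewrite expR0 mulr1.
- by move=> x x0; rewrite mulr_ge0 ?normal_pdf_ge0.
- by apply: continuous_subspaceT => x; apply: cvgM; [exact: cvg_id|exact: cpdf].
- by rewrite -(mulr0 (- s ^+ 2)); apply: cvgMl_tmp; exact: cvgy_normal_pdf0.
- by move=> x _; apply: ex_derive; exact: dF.
- apply: cvg_at_right_filter; apply/differentiable_continuous/derivable1_diffP.
  by apply: ex_derive; exact: dF.
- by move=> x _; rewrite derive1E derive_val.
Qed.

Lemma normal_abs_moment (s : R) : 0 < s ->
  (\int[normal_prob 0 s]_x (`|x|)%:E = (s *+ 2 / Num.sqrt (pi *+ 2))%:E)%E.
Proof.
move=> s_gt0; have s0 : s != 0 by rewrite gt_eqF.
rewrite integral_normal_prob; last 2 first.
- by move=> x; rewrite lee_fin.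
- by apply/measurable_EFinP; exact: normr_measurable.
under eq_integral do rewrite -EFinM.
rewrite ge0_symfun_integralT; last 3 first.
- by move=> x; rewrite mulr_ge0 ?normal_pdf_ge0.
- by move=> x; apply: cvgM; [exact: norm_continuous|exact: continuous_normal_pdf].
- by move=> x; rewrite /= normrN !normal_pdf0E // sqrrN.
rewrite -set_itvcy.
under eq_integral => x.
  by rewrite inE /= in_itv /= andbT => x0; rewrite ger0_norm //; over.
rewrite integral_itvcy_mul_normal_pdf // -EFinM /normal_peak -mulrnAr.
rewrite sqrtrM ?sqr_ge0 // sqrtr_sqr ger0_norm ?ltW //.
have q0 : Num.sqrt (pi *+ 2) != 0 :> R.
  by rewrite gt_eqF // sqrtr_gt0 pmulrn_lgt0 ?pi_gt0.
by congr EFin; field; rewrite q0.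
Qed.

Lemma normal_abs_moment_le (s : R) : 0 < s ->
  (\int[normal_prob 0 s]_x (`|x|)%:E <= s%:E)%E.
Proof.
move=> s_gt0; rewrite normal_abs_moment // lee_fin.
have two_le : 2 <= Num.sqrt (pi *+ 2) :> R.
  rewrite -[leLHS](@ger0_norm _ 2) // -sqrtr_sqr ler_sqrt; last first.
    by rewrite mulrn_wge0 // pi_ge0.
  by have := @pi_ge2 R; lra.
have q_gt0 : 0 < Num.sqrt (pi *+ 2) :> R by apply: lt_le_trans two_le.
by rewrite ler_pdivrMr // -mulr_natr ler_pM2l.
Qed.

End normal_abs_moment.

Lemma ge0_integral_cstD d (T : measurableType d) (R : realType)
    (P : probability T R) (k : R) (f : T -> \bar R) :
  0 <= k -> (forall x, 0 <= f x)%E -> measurable_fun setT f ->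
  (\int[P]_x (k%:E + f x) = k%:E + \int[P]_x f x)%E.
Proof.
move=> k0 f0 mf; rewrite ge0_integralD // integral_cst //.
by rewrite -[X in (_ * X)%E]/(P setT) probability_setT mule1.
Qed.

Lemma clip_dist_le (R : realFieldType) (C y : R) : 0 < C ->
  `|y / Num.max 1 (`|y| / C) - y| <= Num.max 0 (`|y| - C).
Proof.
move=> C_gt0; have [_|large] := leP (`|y| / C) 1.
  by rewrite invr1 mulr1 subrr normr0 le_max lexx.
have y_gt_C : C < `|y| by move: large; rewrite ltr_pdivlMr // mul1r.
have y0 : `|y| != 0 by rewrite gt_eqF // (lt_trans C_gt0).
have -> : y / (`|y| / C) - y = y * (C / `|y| - 1) by field; rewrite y0 gt_eqF.
have ratio_sub1_le0 : C / `|y| - 1 <= 0.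
  by rewrite subr_le0 ler_pdivrMr ?mul1r ?ltW // (lt_trans C_gt0).
rewrite normrM (ler0_norm ratio_sub1_le0).
by rewrite opprB mulrBr mulr1 mulrCA divff // mulr1 le_max lexx orbT.
Qed.

Section violation.
Context {R : realType} {T : finType}.
Implicit Types (h : T -> R) (S P G : {set T}).

Lemma mean_clipped_mean_dist_le (C : R) h S : 0 < C ->
  `|mean h S - clipped_mean C h S|
    <= (#|S|%:R)^-1 * \sum_(z in S) Num.max 0 (`|h z| - C).
Proof.
move=> C_gt0; rewrite /mean /clipped_mean -mulrBr normrM ger0_norm ?invr_ge0 //.
rewrite ler_wpM2l ?invr_ge0 // -sumrB (le_trans (ler_norm_sum _ _ _)) //.
by apply: ler_sum => z _; rewrite distrC clip_dist_le.
Qed.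

Lemma Vviol_Vtilde_dist_le (C : R) h P G (x : R) :
  `|Vviol h P G - Vtilde C h P G x|
    <= `|mean h G - clipped_mean C h G| + `|x|.
Proof.
rewrite /Vviol /Vtilde opprD addrA (le_trans (ler_normB _ _)) // lerD2r.
apply: le_trans (ler_dist_dist _ _) _.
by rewrite opprB addrC addrA subrK distrC.
Qed.

Lemma min_card_ge {I : finType} (G : I -> {set T}) (i0 : I) n :
  (forall j, n <= #|G j|)%N -> (n <= min_card G)%N.
Proof.
move=> nG; apply: (big_ind (fun m => n <= m)%N) => //.
- exact: leq_trans (nG i0) (max_card _).
- by move=> a b na nb; rewrite leq_min na nb.
Qed.

End violation.

Theorem theorem7 (R : realType) (T : finType) (I : finType)
  (D : {set T}) (P G : I -> {set T}) (h : T -> R) (Cd sigmad : R)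
  (hP : forall i, P i \subset D) (hG : forall i, G i \subset P i)
  (hGcard : forall j, (1 < #|G j|)%N)
  (hC : 0 < Cd) (hsigma : 0 < sigmad) (i : I) :
  (\int[normal_prob 0 (sigmad * Delta Cd G)]_x
      (`|Vviol h (P i) (G i) - Vtilde Cd h (P i) (G i) x|)%:E
   <= (Num.sqrt 2 * Cd * sigmad / ((min_card G)%:R - 1)
       + (#|G i|%:R)^-1 * \sum_(z in G i) Num.max 0 (`|h z| - Cd))%:E)%E.
Proof.
have min_card_gt1 : 0 < (min_card G)%:R - 1 :> R.
  by rewrite subr_gt0 ltr1n (min_card_ge i hGcard).
set sd := sigmad * Delta Cd G.
have sd_gt0 : 0 < sd by rewrite mulr_gt0 // divr_gt0 // mulr_gt0 // sqrtr_gt0.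
have -> : Num.sqrt 2 * Cd * sigmad / ((min_card G)%:R - 1) = sd.
  by rewrite /sd /Delta; ring.
set K := `|mean h (G i) - clipped_mean Cd h (G i)|.
apply: (@le_trans _ _ (\int[normal_prob 0 sd]_x (K%:E + (`|x|)%:E))%E).
  apply: ge0_le_integral => //.
  - apply/measurable_EFinP; apply: measurableT_comp => //.
    by apply: measurable_funB => //; exact: measurable_funD.
  - by apply: emeasurable_funD => //; apply/measurable_EFinP; exact: normr_measurable.
  - by move=> x _; rewrite -EFinD lee_fin Vviol_Vtilde_dist_le.
rewrite ge0_integral_cstD; last 3 first.
- exact: normr_ge0.
- by move=> x; rewrite lee_fin.
- by apply/measurable_EFinP; exact: normr_measurable.
rewrite EFinD addeC leeD ?normal_abs_moment_le // lee_fin.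
exact: mean_clipped_mean_dist_le.
Qed.
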